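(* Let $X$ be a locally convex space and let $T\in\mathcal{M}(X)$. Assume that for every open convex $V\subset X$ with $V\cap D(T)\neq\emptyset$ one has $\operatorname{Pr}_{X}[\varphi_{T|_{V}}<c]\cap V\subset\overline{D(T)}$. Then $\overline{D(T)}$ is convex. In particular, if $T\in\mathcal{M}(X)$ is locatable in $\overline{D(T)}$, or if $T\in\mathcal{M}(X)$ is locally-NI, then $\overline{D(T)}$ is convex.
   Context: $X$ is a non-trivial Hausdorff locally convex space, $X^*$ its dual with weak-star topology, $c(x,x^* )=\langle x,x^*\rangle$ on $Z=X\times X^*$. Operators are identified with their graphs; $D(T)$ is the domain, $\overline{D(T)}$ its closure; $T|_V$ has graph $\operatorname{Graph}T\cap(V\times X^* )$. $\varphi_{T}(x,x^{*})=\sup\{\langle x,u^{*}\rangle+\langle u,x^{*}\rangle-\langle u,u^{*}\rangle\mid(u,u^{*})\in T\}$ ($\sup\emptyset=-\infty$). $[f<g]=\{z\mid f(z)<g(z)\}$, etc. $\mathcal{M}(X)$: monotone operators with non-empty graph. $V$ locates $T$ in $S$ if $\operatorname{Pr}_X([\varphi_{T|_V}\le c])\cap V\subset S$; $T$ is locatable in $S$ if every open convex $V$ with $V\cap D(T)\ne\emptyset$ locates $T$ in $S$. $T$ is $V$-NI if $\varphi_{T|_V}\ge c$ on $V\times X^*$; locally-NI if $T$ is $V$-NI for every open convex $V$ with $V\cap D(T)\neq\emptyset$. *)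

From HB Require Import structures.
From mathcomp Require Import all_boot all_order all_algebra.
From mathcomp Require Import all_classical all_reals all_analysis.
Set Implicit Arguments. Unset Strict Implicit. Unset Printing Implicit Defensive.
Import Order.TTheory GRing.Theory Num.Theory.
Local Open Scope classical_set_scope.
Local Open Scope ring_scope.

(* X is a locally convex space [tvsType R] over the
   reals [R : realType]; the dual X^* is represented by the predicate
   [is_dual] on functions X -> R (continuous linear functionals); the
   coupling is <x, x^*> = x^* x.  An operator is identified with its graph,
   a set of pairs (x, x^* ) with x^* in X^*. *)

Section Defs.
Context {R : realType} {E : tvsType R}.

Definition is_dual (f : E -> R) : Prop :=
  (forall (a : R) (x y : E), f (a *: x + y) = a * f x + f y) /\ continuous (f : E -> R^o).

Definition coupling (p : E * (E -> R)) : R := p.2 p.1.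

Definition dom_op (T : set (E * (E -> R))) : set E :=
  [set x | exists xs, T (x, xs)].

Definition restr_op (T : set (E * (E -> R))) (V : set E) : set (E * (E -> R)) :=
  [set p | T p /\ V p.1].

(* Fitzpatrick function, sup of empty set = -oo *)
Definition fitz (T : set (E * (E -> R))) (p : E * (E -> R)) : \bar R :=
  ereal_sup [set ((u.2 p.1 + p.2 u.1 - u.2 u.1)%:E) | u in T].

Definition monotone_op (T : set (E * (E -> R))) : Prop :=
  forall p q, T p -> T q -> 0 <= p.2 (p.1 - q.1) - q.2 (p.1 - q.1).

Definition monotone_nonempty (T : set (E * (E -> R))) : Prop :=
  (forall p, T p -> is_dual p.2) /\ monotone_op T /\ T !=set0.

Definition open_convex (V : set E) : Prop := open V /\ convex_set (V : set (convex_lmodType E)).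

Definition locates (V : set E) (T : set (E * (E -> R))) (S : set E) : Prop :=
  [set x | exists xs, is_dual xs /\ (fitz (restr_op T V) (x, xs) <= (xs x)%:E)%E]
    `&` V `<=` S.

Definition locatable (T : set (E * (E -> R))) (S : set E) : Prop :=
  forall V, open_convex V -> V `&` dom_op T !=set0 -> locates V T S.

Definition V_NI (V : set E) (T : set (E * (E -> R))) : Prop :=
  forall x xs, V x -> is_dual xs -> ((xs x)%:E <= fitz (restr_op T V) (x, xs))%E.

Definition locally_NI (T : set (E * (E -> R))) : Prop :=
  forall V, open_convex V -> V `&` dom_op T !=set0 -> V_NI V T.

End Defs.

(* It suffices that every convex combination z = l a + (1 - l) b of points a, b
   of D(T) lies in the closure of D(T).  If it did not, a continuous functional
   w with w (a - z) = 1 (Hahn-Banach applied to the gauge of a convex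
   neighbourhood of 0) and a thin open convex tube V around the segment [z, a]
   can be chosen so that w >= w z + del on V /\ D(T).  For
   x^* = l a' + (1 - l) b' - mu w, monotonicity of T gives
   phi_{T|V}(z, x^* ) <= l <a, a'> + (1 - l) <b, b'> - mu (w z + del),
   which is < <z, x^* > for mu large, so the hypothesis puts z back into the
   closure of D(T).  Locatability and the local NI property are special cases
   of the hypothesis. *)

From HB Require Import structures.
From mathcomp Require Import all_boot all_order all_algebra.
From mathcomp Require Import all_classical all_reals all_analysis.
From mathcomp Require Import ring lra.
Set Implicit Arguments. Unset Strict Implicit. Unset Printing Implicit Defensive.
Import Order.TTheory GRing.Theory Num.Theory.
Local Open Scope classical_set_scope.
Local Open Scope ring_scope.

Section linear_functional.
Context {R : realType} {E : lmodType R}.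
Variable f : E -> R.
Hypothesis f_lin : forall (a : R) x y, f (a *: x + y) = a * f x + f y.

Lemma lin0 : f 0 = 0.
Proof. by have := f_lin 1 0 0; rewrite scale1r addr0 mul1r => h; lra. Qed.

Lemma linD x y : f (x + y) = f x + f y.
Proof. by have := f_lin 1 x y; rewrite scale1r mul1r. Qed.

Lemma linZ a x : f (a *: x) = a * f x.
Proof. by have := f_lin a x 0; rewrite !addr0 lin0 addr0. Qed.

Lemma linN x : f (- x) = - f x.
Proof. by rewrite -scaleN1r linZ mulN1r. Qed.

Lemma linB x y : f (x - y) = f x - f y.
Proof. by rewrite linD linN. Qed.

End linear_functional.

Section hahn_banach.
Context {R : realType} {E : lmodType R}.
Variable p : E -> R.
Hypothesis p_subadd : forall x y, p (x + y) <= p x + p y.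
Hypothesis p_hom : forall (r : R) x, 0 < r -> p (r *: x) <= r * p x.

Lemma sublinear_homE r x : 0 < r -> p (r *: x) = r * p x.
Proof.
move=> r0; apply/eqP; rewrite eq_le p_hom //=.
have := @p_hom r^-1 (r *: x); rewrite invr_gt0 => /(_ r0).
by rewrite scalerA mulVf ?gt_eqF // scale1r -ler_pdivlMl.
Qed.

Lemma sublinear0 : p 0 = 0.
Proof. by have := @sublinear_homE 2 0 (ltr0Sn _ 1); rewrite scaler0 => h; lra. Qed.

Lemma sublinear_oppr_le x : - p (- x) <= p x.
Proof. by have := p_subadd x (- x); rewrite subrr sublinear0 => h; lra. Qed.

(* Partial linear functionals dominated by [p], represented by their graphs so
   that a chain of them is joined by its union. *)
Definition dominated_graph (G : set (E * R)) :=
  [/\ forall x a b, G (x, a) -> G (x, b) -> a = b,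
      forall x a y b, G (x, a) -> G (y, b) -> G (x + y, a + b),
      forall r x a, G (x, a) -> G (r *: x, r * a) &
      forall x a, G (x, a) -> a <= p x].

Lemma dominated_graph_bigcup (F : set (set (E * R))) :
  total_on F subset -> (forall G, F G -> dominated_graph G) ->
  dominated_graph (\bigcup_(G in F) G).
Proof.
move=> Ftot Fdom.
have common X1 X2 q1 q2 : F X1 -> F X2 -> X1 q1 -> X2 q2 ->
    exists2 X, F X & X q1 /\ X q2.
  move=> F1 F2 h1 h2; case: (Ftot _ _ F1 F2) => [s12|s21].
    by exists X2 => //; split => //; exact: s12.
  by exists X1 => //; split => //; exact: s21.
split.
- move=> x a b [X1 F1 h1] [X2 F2 h2].
  have [X FX [g1 g2]] := common _ _ _ _ F1 F2 h1 h2.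
  by have [fX _ _ _] := Fdom _ FX; exact: fX g1 g2.
- move=> x a y b [X1 F1 h1] [X2 F2 h2].
  have [X FX [g1 g2]] := common _ _ _ _ F1 F2 h1 h2.
  by have [_ dX _ _] := Fdom _ FX; exists X => //; exact: dX.
- move=> r x a [X FX h].
  by have [_ _ sX _] := Fdom _ FX; exists X => //; exact: sX.
- move=> x a [X FX h].
  by have [_ _ _ pX] := Fdom _ FX; exact: pX.
Qed.

Lemma dominated_graph_line v :
  dominated_graph [set q | exists s, q = (s *: v, s * p v)].
Proof.
split.
- move=> x a b [s1 [e1 ->]] [s2 [e2 ->]].
  have : (s1 - s2) *: v = 0 by rewrite scalerBl -e1 -e2 subrr.
  move/eqP; rewrite scaler_eq0 => /orP[|/eqP ->].
    by rewrite subr_eq0 => /eqP ->.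
  by rewrite sublinear0 !mulr0.
- move=> x a y b [s1 [-> ->]] [s2 [-> ->]].
  by exists (s1 + s2); rewrite scalerDl mulrDl.
- move=> r x a [s [-> ->]].
  by exists (r * s); rewrite scalerA mulrA.
- move=> x a [s [-> ->]].
  have [s0|s0|->] := ltrgtP s 0; last by rewrite scale0r mul0r sublinear0.
  + rewrite -[s]opprK scaleNr -scalerN sublinear_homE ?oppr_gt0 //.
    by have := sublinear_oppr_le v; nra.
  + by rewrite sublinear_homE.
Qed.

Lemma dominated_graph_gap A w : dominated_graph A -> A (0, 0) ->
  exists c, forall y b, A (y, b) -> b - p (y - w) <= c /\ c <= p (y + w) - b.
Proof.
move=> [_ dA _ pA] A00.
have gap y1 b1 y2 b2 : A (y1, b1) -> A (y2, b2) ->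
    b1 - p (y1 - w) <= p (y2 + w) - b2.
  move=> h1 h2; have := pA _ _ (dA _ _ _ _ h1 h2).
  have := p_subadd (y1 - w) (y2 + w).
  by rewrite addrACA addNr addr0; lra.
pose L := [set r | exists y b, A (y, b) /\ r = b - p (y - w)].
have Lne : L !=set0 by exists (0 - p (0 - w)), 0, 0.
have Lub : has_ubound L by exists (p (0 + w) - 0) => _ [y [b [h ->]]]; exact: gap.
exists (sup L) => y b h; split; first by apply: ub_le_sup => //; exists y, b.
by apply: ge_sup => // _ [y' [b' [h' ->]]]; exact: gap.
Qed.

Lemma dominated_graph_extend_le A w c x a s : dominated_graph A ->
  (forall y b, A (y, b) -> b - p (y - w) <= c /\ c <= p (y + w) - b) ->
  A (x, a) -> a + s * c <= p (x + s *: w).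
Proof.
move=> [_ _ sA pA] gap_c Axa.
have [s0|s0|->] := ltrgtP s 0; last by rewrite scale0r mul0r !addr0; exact: pA.
- have := (gap_c _ _ (sA (- s)^-1 _ _ Axa)).1.
  have -> : (- s)^-1 *: x - w = (- s)^-1 *: (x + s *: w).
    by rewrite scalerDr scalerA invrN mulNr mulVf ?lt_eqF // scaleN1r.
  rewrite sublinear_homE ?invr_gt0 ?oppr_gt0 // -mulrBr ler_pdivrMl ?oppr_gt0 //.
  by nra.
- have := (gap_c _ _ (sA s^-1 _ _ Axa)).2.
  have -> : s^-1 *: x + w = s^-1 *: (x + s *: w).
    by rewrite scalerDr scalerA mulVf ?gt_eqF // scale1r.
  rewrite sublinear_homE ?invr_gt0 // -mulrBr ler_pdivlMl //.
  by nra.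
Qed.

Lemma dominated_graph_extend A w : dominated_graph A -> A (0, 0) ->
  (forall a, ~ A (w, a)) -> exists2 B, A `<` B & dominated_graph B.
Proof.
move=> domA A00 wA; have [c gap_c] := @dominated_graph_gap A w domA A00.
have [fA dA sA _] := domA.
have subA x1 a1 x2 a2 : A (x1, a1) -> A (x2, a2) -> A (x1 - x2, a1 - a2).
  by move=> h1 /(sA (-1)); rewrite scaleN1r mulN1r; exact: dA.
pose B := [set q : E * R | exists x a s,
  [/\ A (x, a), q.1 = x + s *: w & q.2 = a + s * c]].
exists B.
  split; first by move=> [x a] h; exists x, a, 0; rewrite scale0r mul0r !addr0.
  move=> /(_ (w, c)) BA; apply: (wA c); apply: BA.
  by exists 0, 0, 1; rewrite scale1r mul1r !add0r.
split.
- move=> x a b [x1 [a1 [s1 [A1 /= e1 ->]]]] [x2 [a2 [s2 [A2 /= e2 ->]]]].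
  have [es|ns] := eqVneq s1 s2.
    subst s2; have ex : x1 = x2 by apply: (addIr (s1 *: w)); rewrite -e1 -e2.
    by subst x2; rewrite (fA _ _ _ A1 A2).
  have exw : x2 - x1 = (s1 - s2) *: w.
    have ex1 : x1 = x - s1 *: w by rewrite e1 addrK.
    have ex2 : x2 = x - s2 *: w by rewrite e2 addrK.
    by rewrite ex1 ex2 opprB addrC addrA subrK scalerBl.
  have := sA (s1 - s2)^-1 _ _ (subA _ _ _ _ A2 A1).
  by rewrite exw scalerA mulVf ?subr_eq0 // scale1r => /wA.
- move=> x a y b [x1 [a1 [s1 [A1 /= -> ->]]]] [x2 [a2 [s2 [A2 /= -> ->]]]].
  exists (x1 + x2), (a1 + a2), (s1 + s2); split; first exact: dA.
    by rewrite /= scalerDl addrACA.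
  by rewrite /= mulrDl addrACA.
- move=> r x a [x1 [a1 [s1 [A1 /= -> ->]]]].
  exists (r *: x1), (r * a1), (r * s1); split; first exact: sA.
    by rewrite /= scalerDr scalerA.
  by rewrite /= mulrDr mulrA.
- move=> x a [x1 [a1 [s [A1 /= -> ->]]]].
  exact: dominated_graph_extend_le domA gap_c A1.
Qed.

Theorem hahn_banach v : exists f : E -> R,
  [/\ forall (a : R) x y, f (a *: x + y) = a * f x + f y,
      forall x, f x <= p x & f v = p v].
Proof.
pose P G := dominated_graph G /\ (G !=set0 -> G (v, p v)).
have [A [[domA Av] Amax]] : exists A, P A /\ forall B, A `<` B -> ~ P B.
  apply: Zorn_bigcup => F FP Ftot; split.
    by apply: dominated_graph_bigcup => // G /FP [].
  by move=> [q [G FG Gq]]; exists G => //; apply: (FP G FG).2; exists q.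
have {}Av : A (v, p v).
  apply: Av; apply/set0P/eqP => A0.
  pose L := [set q | exists s, q = (s *: v, s * p v)].
  have Lv : L (v, p v) by exists 1; rewrite scale1r mul1r.
  apply: (Amax L); last by split; [exact: dominated_graph_line | move=> _].
  by rewrite A0; split; [exact: sub0set | move/(_ _ Lv)].
have [fA dA sA pA] := domA.
have A00 : A (0, 0) by have := sA 0 _ _ Av; rewrite scale0r mul0r.
have A_total w : exists a, A (w, a).
  apply: contrapT => nw.
  have [B AB domB] := @dominated_graph_extend A w domA A00 (fun a h => nw (ex_intro _ a h)).
  by apply: (Amax B AB); split => // _; apply: AB.1.
have [f Af] := choice A_total.
exists f; split.
- by move=> a x y; apply: (fA (a *: x + y)) => //; exact: dA (sA _ _ _ (Af x)) (Af y).
- by move=> x; exact: pA.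
- exact: fA (Af v) Av.
Qed.

End hahn_banach.

Lemma convex_setP {R : realType} {E : lmodType R} (A : set E) :
  convex_set (A : set (convex_lmodType E)) <->
  forall x y (l : R), 0 <= l -> l <= 1 -> A x -> A y -> A (l *: x + (1 - l) *: y).
Proof.
split => [cA x y l l0 l1 Ax Ay | cA x y l /set_mem Ax /set_mem Ay].
  by have /set_mem := cA x y (Itv01 l0 l1) (mem_set Ax) (mem_set Ay).
by apply/mem_set; apply: cA.
Qed.

Section tvs.
Context {R : realType} {E : tvsType R}.

Lemma cvgD_tvs {T : Type} (F : set_system T) {FF : Filter F} (f g : T -> E) (a b : E) :
  f @ F --> a -> g @ F --> b -> (fun t => f t + g t) @ F --> a + b.
Proof. exact: (@continuous2_cvg _ _ _ _ _ _ f g +%R _ _ (add_continuous (a, b))). Qed.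

Lemma cvgZ_tvs {T : Type} (F : set_system T) {FF : Filter F}
    (s : T -> R^o) (f : T -> E) (k : R^o) (a : E) :
  s @ F --> k -> f @ F --> a -> (fun t => s t *: f t) @ F --> k *: a.
Proof. exact: (@continuous2_cvg _ _ _ _ _ _ s f *:%R _ _ (scale_continuous (k, a))). Qed.

Lemma is_dual_scale (g : E -> R) (k : R) : is_dual g -> is_dual (fun y => k * g y).
Proof.
move=> [lg cg]; split; first by move=> a x y; rewrite lg; ring.
by move=> x; apply: cvgMl_tmp; exact: cg.
Qed.

Lemma is_dual_comb (g h : E -> R) (k : R) : is_dual g -> is_dual h ->
  is_dual (fun y => k * g y + h y).
Proof.
move=> dg [lh ch]; have [lg cg] := @is_dual_scale g k dg; split.
  by move=> a x y; rewrite lg lh; ring.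
by move=> x; apply: cvgD; [exact: cg | exact: ch].
Qed.

Lemma continuous_lin_bounded (f : E -> R) (K : set E) :
  (forall (a : R) x y, f (a *: x + y) = a * f x + f y) ->
  nbhs 0 K -> (forall u, K u -> `|f u| <= 1) -> continuous (f : E -> R^o).
Proof.
move=> f_lin K0 fK x; apply/cvgrPdist_lt => e e0.
have e2 : e / 2 != 0 by rewrite gt_eqF // divr_gt0.
have := nbhsZ e2 K0; rewrite scaler0 => /(nbhsB x); rewrite addr0.
apply: filterS => _ [_ [k Kk <-] <-].
rewrite (linD f_lin) (linZ f_lin) opprD addNKr normrN normrM gtr0_norm ?divr_gt0 //.
by have := fK k Kk; nra.
Qed.

Lemma nbhs_open_convex (x : E) (A : set E) : nbhs x A ->
  exists2 U, [/\ open U, convex_set (U : set (convex_lmodType E)) & U x] & U `<=` A.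
Proof.
move=> xA; have [B convB [openB baseB]] := @locally_convex R E.
have [U [BU Ux] UA] := baseB x A xA.
by exists U => //; split => //; [exact: openB | exact: convB (mem_set BU)].
Qed.

End tvs.

Section gauge.
Context {R : realType} {E : tvsType R}.

Lemma nbhs0_absorbing (C : set E) (x : E) : nbhs 0 C ->
  exists2 r : R, 0 < r & C (r^-1 *: x).
Proof.
move=> C0; have /= := @scale_continuous R E (0, x) C; rewrite scale0r => /(_ C0).
move=> [[B1 B2] /= [/nbhs_ballP [e /= e0 Be] B2x] BC].
exists (e / 2)^-1; first by rewrite invr_gt0 divr_gt0.
rewrite invrK; apply: (BC (e / 2, x)); split; last exact: nbhs_singleton.
apply: Be; rewrite /ball /= sub0r normrN gtr0_norm ?divr_gt0 //.
by rewrite ltr_pdivrMr // ltr_pMr // ltr1n.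
Qed.

Definition gauge (C : set E) (x : E) : R := inf [set r : R | 0 < r /\ C (r^-1 *: x)].

Variable C : set E.
Hypothesis C0 : nbhs 0 C.
Hypothesis convC : convex_set (C : set (convex_lmodType E)).

Let gauge_set_neq0 x : [set r : R | 0 < r /\ C (r^-1 *: x)] !=set0.
Proof. by have [r r0 h] := nbhs0_absorbing x C0; exists r. Qed.

Let gauge_set_lbound x : has_lbound [set r : R | 0 < r /\ C (r^-1 *: x)].
Proof. by exists 0 => r [/ltW]. Qed.

Lemma gauge_le x r : 0 < r -> C (r^-1 *: x) -> gauge C x <= r.
Proof. by move=> r0 h; apply: ge_inf (gauge_set_lbound x) _ _. Qed.

Lemma gauge_ge x m : (forall r, 0 < r -> C (r^-1 *: x) -> m <= r) -> m <= gauge C x.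
Proof. by move=> h; apply: lb_le_inf (gauge_set_neq0 x) _ => r [r0 hr]; exact: h. Qed.

Lemma gauge_subadditive x y : gauge C (x + y) <= gauge C x + gauge C y.
Proof.
have sum_le r s : 0 < r -> C (r^-1 *: x) -> 0 < s -> C (s^-1 *: y) ->
    gauge C (x + y) <= r + s.
  move=> r0 Cr s0 Cs; have rs0 : 0 < r + s by exact: addr_gt0.
  apply: gauge_le => //.
  have l0 : 0 <= r / (r + s) by rewrite divr_ge0 // ltW.
  have l1 : r / (r + s) <= 1 by rewrite ler_pdivrMr // mul1r lerDl ltW.
  (* [(x + y) / (r + s)] is a convex combination of [x / r] and [y / s]. *)
  have := (convex_setP C).1 convC _ _ _ l0 l1 Cr Cs; rewrite !scalerA.
  have -> : r / (r + s) * r^-1 = (r + s)^-1 by field; rewrite ?gt_eqF.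
  have -> : (1 - r / (r + s)) * s^-1 = (r + s)^-1 by field; rewrite ?gt_eqF.
  by rewrite -scalerDr.
have le_sub s : 0 < s -> C (s^-1 *: y) -> gauge C (x + y) - s <= gauge C x.
  by move=> s0 Cs; apply: gauge_ge => r r0 Cr; have := sum_le r s r0 Cr s0 Cs; lra.
have : gauge C (x + y) - gauge C x <= gauge C y.
  by apply: gauge_ge => s s0 Cs; have := le_sub s s0 Cs; lra.
lra.
Qed.

Lemma gauge_hom (t : R) x : 0 < t -> gauge C (t *: x) <= t * gauge C x.
Proof.
move=> t0; rewrite -ler_pdivrMl //; apply: gauge_ge => r r0 Cr.
rewrite ler_pdivrMl //; apply: gauge_le; first exact: mulr_gt0.
by rewrite scalerA invfM mulrAC mulVf ?gt_eqF // mul1r.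
Qed.

Lemma gauge_le1 x : C x -> gauge C x <= 1.
Proof. by move=> Cx; apply: gauge_le => //; rewrite invr1 scale1r. Qed.

Lemma gauge_ge1 x : ~ C x -> 1 <= gauge C x.
Proof.
move=> Cx; rewrite leNgt; apply/negP => /(inf_lt (gauge_set_neq0 x)) [r [r0 Cr] r1].
apply: Cx.
have := (convex_setP C).1 convC _ _ _ (ltW r0) (ltW r1) Cr (nbhs_singleton C0).
by rewrite scaler0 addr0 scalerA mulfV ?gt_eqF // scale1r.
Qed.

End gauge.

Theorem hausdorff_dual_separates {R : realType} {E : tvsType R} :
  hausdorff_space E -> forall v : E, v != 0 -> exists f : E -> R, is_dual f /\ f v = 1.
Proof.
move=> hE v v0; rewrite eq_sym in v0.
have [A [oA /set_mem A0 /set_mem Av]] := hausdorff_accessible hE v0.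
have [C [oC convC C0] CA] := nbhs_open_convex (open_nbhs_nbhs (conj oA A0)).
have nC : nbhs 0 C by apply: open_nbhs_nbhs.
have gauge_v : 1 <= gauge C v by apply: gauge_ge1 => // /CA.
have [f [f_lin f_gauge fv]] := hahn_banach (gauge_subadditive nC convC) (gauge_hom nC) v.
have fv0 : f v != 0 by rewrite fv gt_eqF // (lt_le_trans ltr01).
have f_cont : continuous (f : E -> R^o).
  apply: (continuous_lin_bounded f_lin (filterI nC (nbhs0N nC))).
  have f_le1 u : C u -> f u <= 1 by move=> Cu; exact: le_trans (f_gauge u) (gauge_le1 Cu).
  move=> u [Cu [c Cc cu]]; subst u.
  by rewrite ler_norml (linN f_lin) lerN2 f_le1 //= -(linN f_lin) f_le1.
exists (fun y => (f v)^-1 * f y); split; first exact: is_dual_scale.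
by rewrite mulVf.
Qed.

Section segments.
Context {R : realType} {E : tvsType R}.

Lemma closure_convex_segments (S : set E) :
  (forall a b (l : R), 0 <= l -> l <= 1 -> S a -> S b ->
     closure S (l *: a + (1 - l) *: b)) ->
  convex_set (closure S : set (convex_lmodType E)).
Proof.
move=> segS; apply/convex_setP => x y l l0 l1 Sx Sy O zO.
have [Op [oOp Opz] OpO] : exists2 Op, open_nbhs (l *: x + (1 - l) *: y) Op & Op `<=` O.
  by move: zO; rewrite nbhsE.
have comb_cont : (fun ab : E * E => l *: ab.1 + (1 - l) *: ab.2) @ (x, y) -->
    l *: x + (1 - l) *: y.
  by apply: cvgD_tvs; apply: cvgZ_tvs;
    [exact: cvg_cst | exact: cvg_fst | exact: cvg_cst | exact: cvg_snd].
have [[A B] /= [xA yB] AB] := comb_cont Op (open_nbhs_nbhs (conj oOp Opz)).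
have [a [Sa Aa]] := Sx A xA.
have [b [Sb Bb]] := Sy B yB.
have Op_ab : Op (l *: a + (1 - l) *: b) by exact: (AB (a, b)).
have [d [Sd Opd]] := segS a b l l0 l1 Sa Sb Op (open_nbhs_nbhs (conj oOp Op_ab)).
by exists d; split => //; exact: OpO.
Qed.

Lemma nbhs_ray (z d : E) (N : set E) : nbhs z N ->
  exists2 eps : R, 0 < eps &
    exists2 B, nbhs 0 B & forall s u, `|s| < eps -> B u -> N (z + s *: d + u).
Proof.
move=> zN.
have ray_cont : (fun su : R^o * E => z + su.1 *: d + su.2) @ ((0 : R^o), 0) -->
    z + (0 : R^o) *: d + 0.
  apply: cvgD_tvs; last exact: cvg_snd.
  by apply: cvgD_tvs; [exact: cvg_cst | apply: cvgZ_tvs; [exact: cvg_fst | exact: cvg_cst]].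
move: ray_cont; rewrite scale0r !addr0 => /(_ N zN) [[S B] /= [S0 B0] SB].
have [eps /= eps0 epsS] := iffLR (nbhs_ballP _ _) S0.
exists eps => //; exists B => // s u se Bu; apply: (SB (s, u)); split => //=.
by apply: epsS; rewrite /ball /= sub0r normrN.
Qed.

Definition segment_thickening (z d : E) (U : set E) : set E :=
  [set v | exists s u, [/\ 0 <= s <= 1, U u & v = z + s *: d + u]].

Lemma open_convex_segment_thickening (z d : E) (U : set E) :
  open U -> convex_set (U : set (convex_lmodType E)) ->
  open_convex (segment_thickening z d U).
Proof.
move=> oU convU; split.
  rewrite openE => _ [s [u [s01 Uu ->]]].
  have := nbhsB (z + s *: d) (open_nbhs_nbhs (conj oU Uu)).
  by apply: filterS => _ [u' Uu' <-]; exists s, u'; split.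
apply/convex_setP => _ _ l l0 l1 [s1 [u1 [s1_01 Uu1 ->]]] [s2 [u2 [s2_01 Uu2 ->]]].
exists (l * s1 + (1 - l) * s2), (l *: u1 + (1 - l) *: u2); split.
- by move: s1_01 s2_01 => /andP [? ?] /andP [? ?]; apply/andP; split; nra.
- exact: (convex_setP U).1 convU _ _ _ l0 l1 Uu1 Uu2.
- rewrite !scalerDr !scalerA addrACA [X in X + _ = _]addrACA -scalerDl.
  by rewrite [l + _]addrC subrK scale1r -scalerDl.
Qed.

Lemma open_convex_penalty (S : set E) (z a : E) : hausdorff_space E ->
  ~ closure S z -> S a ->
  exists V (w : E -> R) (del : R),
    [/\ open_convex V, V z /\ V a, is_dual w, 0 < del &
        forall u, V u -> S u -> w z + del <= w u].
Proof.
move=> hE zS Sa.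
have [N zN NS] : exists2 N, nbhs z N & forall u, N u -> ~ S u.
  apply: contrapT => noN; apply: zS => N zN; apply: contrapT => NS; apply: noN.
  by exists N => // u Nu Su; apply: NS; exists u.
have az : a - z != 0.
  by rewrite subr_eq0; apply: contra_not_neq zS => <-; exact: subset_closure.
have [w [[lw cw] wd]] := hausdorff_dual_separates hE az.
have [eps eps0 [B B0 rayN]] := nbhs_ray (a - z) zN.
have del0 : 0 < eps / 2 by rewrite divr_gt0.
have w_small : nbhs 0 [set u | `|w u| < eps / 2].
  move: (cw 0) => /cvgrPdist_lt /(_ _ del0).
  by apply: filterS => u; rewrite (lin0 lw) sub0r normrN.
have [U [oU convU U0] UB] := nbhs_open_convex (filterI B0 w_small).
exists (segment_thickening z (a - z) U), w, (eps / 2); split => //.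
- exact: open_convex_segment_thickening.
- split; [exists 0, 0 | exists 1, 0]; split; rewrite ?lexx ?ler01 //.
    by rewrite scale0r !addr0.
  by rewrite scale1r addr0 addrC subrK.
- move=> _ [s [u [/andP [s0 s1] Uu ->]]] Su.
  have se : eps <= s.
    rewrite leNgt; apply/negP => se; apply: (NS _ _ Su).
    by apply: rayN; [rewrite ger0_norm | exact: (UB _ Uu).1].
  have := (UB _ Uu).2; rewrite /= ltr_norml => /andP [wu _].
  by rewrite !(linD lw) (linZ lw) wd; lra.
Qed.

End segments.

Section fitzpatrick.
Context {R : realType} {E : tvsType R}.
Variable T : set (E * (E -> R)).
Hypothesis hT : monotone_nonempty T.

(* The Fitzpatrick function of [T] at [(z, l a' + (1 - l) b')], evaluated at
   the single pair [(u, u')], is bounded by [l <a, a'> + (1 - l) <b, b'>]. *)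
Lemma monotone_comb_coupling_le (a b u : E) (a' b' u' : E -> R) (l : R) :
  T (a, a') -> T (b, b') -> T (u, u') -> 0 <= l <= 1 ->
  u' (l *: a + (1 - l) *: b) + (l * a' u + (1 - l) * b' u) - u' u
    <= l * a' a + (1 - l) * b' b.
Proof.
move=> Ta Tb Tu /andP [l0 l1]; have [dualT [monT _]] := hT.
have [la' _] : is_dual a' := dualT _ Ta.
have [lb' _] : is_dual b' := dualT _ Tb.
have [lu' _] : is_dual u' := dualT _ Tu.
have := monT _ _ Tu Ta; rewrite /= !(linB lu') !(linB la') => mon_a.
have := monT _ _ Tu Tb; rewrite /= !(linB lu') !(linB lb') => mon_b.
rewrite (linD lu') !(linZ lu').
have l1' : 0 <= 1 - l by rewrite subr_ge0.
have := mulr_ge0 l0 mon_a; have := mulr_ge0 l1' mon_b.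
nra.
Qed.

Lemma fitz_restr_lt_of_penalty (V : set E) (a b z : E) (a' b' w : E -> R) (l del : R) :
  T (a, a') -> T (b, b') -> 0 <= l <= 1 -> z = l *: a + (1 - l) *: b ->
  is_dual w -> 0 < del -> (forall u, V u -> dom_op T u -> w z + del <= w u) ->
  exists xs, is_dual xs /\ (fitz (restr_op T V) (z, xs) < (xs z)%:E)%E.
Proof.
move=> Ta Tb l01 zE dw del0 penalty; have [dualT _] := hT.
set K := l * a' a + (1 - l) * b' b - (l * a' z + (1 - l) * b' z).
(* [mu] is large enough for the penalty [mu * del] to beat [K]. *)
set mu := (`|K| + 1) / del.
have mu0 : 0 <= mu by rewrite divr_ge0 ?ltW // addr_ge0.
have mu_del : mu * del = `|K| + 1 by rewrite divfK ?gt_eqF.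
pose xs y := l * a' y + ((1 - l) * b' y + (- mu) * w y).
exists xs; split.
  exact: is_dual_comb l (dualT _ Ta)
           (is_dual_comb (1 - l) (dualT _ Tb) (is_dual_scale (- mu) dw)).
apply: (@le_lt_trans _ _ (xs z - 1)%:E); last by rewrite lte_fin gtrBl ltr01.
apply: ge_ereal_sup => _ [[u u'] [Tu Vu] <-] /=; rewrite lee_fin.
have := monotone_comb_coupling_le Ta Tb Tu l01; rewrite -zE.
have := ler_wpM2l mu0 (penalty u Vu (ex_intro _ u' Tu)).
have := ler_norm K.
rewrite /xs /K mulrDr; lra.
Qed.

Hypothesis hE : hausdorff_space E.
Hypothesis hloc : forall V : set E, open_convex V -> V `&` dom_op T !=set0 ->
  [set x | exists xs, is_dual xs /\ (fitz (restr_op T V) (x, xs) < (xs x)%:E)%E] `&` V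
    `<=` closure (dom_op T).

Lemma comb_in_closure_dom (a b : E) (a' b' : E -> R) (l : R) :
  T (a, a') -> T (b, b') -> 0 <= l <= 1 ->
  closure (dom_op T) (l *: a + (1 - l) *: b).
Proof.
move=> Ta Tb l01; apply: contrapT => zD.
have [V [w [del [oV [Vz Va] dw del0 penalty]]]] :=
  open_convex_penalty hE zD (ex_intro _ a' Ta).
have [xs [dxs fitz_lt]] := fitz_restr_lt_of_penalty Ta Tb l01 erefl dw del0 penalty.
apply: zD; apply: (hloc oV); first by exists a; split => //; exists a'.
by split => //; exists xs.
Qed.

Lemma convex_closure_dom : convex_set (closure (dom_op T) : set (convex_lmodType E)).
Proof.
apply: closure_convex_segments => a b l l0 l1 [a' Ta] [b' Tb].
by apply: comb_in_closure_dom Ta Tb _; rewrite l0 l1.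
Qed.

End fitzpatrick.

Theorem theorem2p7 (R : realType) (E : tvsType R)
  (hE : hausdorff_space E) (ntE : exists x : E, x != 0)
  (T : set (E * (E -> R))) (hT : monotone_nonempty T) :
  ((forall V : set E, open_convex V -> V `&` dom_op T !=set0 ->
      [set x | exists xs, is_dual xs /\
         (fitz (restr_op T V) (x, xs) < (xs x)%:E)%E] `&` V
      `<=` closure (dom_op T)) ->
    convex_set (closure (dom_op T) : set (convex_lmodType E)))
  /\ (locatable T (closure (dom_op T)) ->
    convex_set (closure (dom_op T) : set (convex_lmodType E)))
  /\ (locally_NI T ->
    convex_set (closure (dom_op T) : set (convex_lmodType E))).
Proof.
split; first exact: convex_closure_dom.
split=> [T_loc | T_NI]; apply: convex_closure_dom => // V oV VD x [[xs [dxs lt_c]] Vx].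
- by apply: (T_loc V oV VD x); split => //; exists xs; split => //; exact: ltW.
- by have := T_NI V oV VD x xs Vx dxs; rewrite leNgt lt_c.
Qed.
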